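(* Let $m\ge 3$ and $n\ge 5$ be integers, let $\Gamma=C_m\Box C_n$ with vertex set $\{0,\dots,m-1\}\times\{0,\dots,n-1\}$, and let $S$ be a disjunctive dominating set of $\Gamma$. For $j\in\mathbb Z$ let $x_j=|S\cap T_j|$, where $T_j=\{(i,j')\,:\,0\le i\le m-1\}$ with $j'\equiv j\pmod n$, $0\le j'\le n-1$ (so indices are read modulo $n$). Then for every $j=0,1,\dots,n-1$, $$x_{j-2}+4x_{j-1}+8x_j+4x_{j+1}+x_{j+2}\ge 2m.$$
   Context: $C_k$ denotes the cycle with vertex set $\{0,\dots,k-1\}$, where $i,j$ are adjacent iff $i-j\equiv\pm1\pmod k$. $G\Box H$ is the Cartesian product: vertex set $V(G)\times V(H)$, with $(g,h)\sim(g',h')$ iff either $g=g'$ and $hh'\in E(H)$, or $h=h'$ and $gg'\in E(G)$. For a graph $\Gamma$ and vertex $v$, $\Gamma(v)$ is the set of vertices at distance $1$ from $v$ and $\Gamma_2(v)$ the set at distance exactly $2$. A set $S\subseteq V(\Gamma)$ is a disjunctive dominating set if every vertex $v\notin S$ satisfies $|\Gamma(v)\cap S|\ge 1$ or $|\Gamma_2(v)\cap S|\ge 2$. *)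

From mathcomp Require Import all_boot all_order all_algebra.
Set Implicit Arguments. Unset Strict Implicit. Unset Printing Implicit Defensive.

Definition cyc_adj (k : nat) : rel 'I_k :=
  fun i j => (val i == (val j).+1 %% k) || (val j == (val i).+1 %% k).

Definition cart_adj (U V : finType) (e1 : rel U) (e2 : rel V) : rel (U * V) :=
  fun x y => ((x.1 == y.1) && e2 x.2 y.2) || ((x.2 == y.2) && e1 x.1 y.1).

Definition torus_adj (m n : nat) : rel ('I_m * 'I_n) :=
  cart_adj (@cyc_adj m) (@cyc_adj n).

Definition nbr1 (T : finType) (e : rel T) (v : T) : {set T} :=
  [set w | e v w].

Definition nbr2 (T : finType) (e : rel T) (v : T) : {set T} :=
  [set w | [&& w != v, ~~ e v w & [exists u, e v u && e u w]]].

Definition disjunctive_dominating (T : finType) (e : rel T) (S : {set T}) : Prop :=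
  forall v, v \notin S ->
    (1 <= #|nbr1 e v :&: S|) || (2 <= #|nbr2 e v :&: S|).

Definition colcount (m n : nat) (S : {set 'I_m * 'I_n}) (j : int) : nat :=
  #|[set v in S | val v.2 == absz (j %% n)%Z]|.

From mathcomp Require Import all_boot all_order all_algebra.
From mathcomp Require Import zify ring.
Set Implicit Arguments. Unset Strict Implicit. Unset Printing Implicit Defensive.
Import GRing.Theory Num.Theory.

(* Let every vertex v receive weight 2 from itself and from each neighbour in
   S, and weight 1 from each vertex of S at distance 2: disjunctive domination
   says exactly that every vertex receives weight at least 2, so column j
   receives at least 2m.  Conversely, a vertex of S in column k gives column j
   at most 8, 4 or 1 according as k = j, k = j +- 1 or k = j +- 2, because a
   vertex of the cycle C_m has at most two neighbours and at most two vertices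
   at distance 2. *)

Lemma sum_nat_mem_card (T : finType) (A : {pred T}) :
  \sum_(x : T) (x \in A : nat) = #|A|.
Proof. by rewrite -sum1_card [RHS]big_mkcond; apply: eq_bigr => x _; case: (x \in A). Qed.

Lemma sum_nat_mem_cardM (T : finType) (A : {pred T}) (c : nat) :
  \sum_(x : T) (x \in A) * c = #|A| * c.
Proof. by rewrite -big_distrl sum_nat_mem_card. Qed.

Lemma sum_nat_mem_setI (T : finType) (A S : {set T}) :
  \sum_(s in S) (s \in A : nat) = #|A :&: S|.
Proof.
rewrite -sum1_card [RHS]big_mkcond [LHS]big_mkcond /=.
by apply: eq_bigr => s _; rewrite !inE andbC; case: (s \in S); case: (s \in A).
Qed.

Lemma eqz_mod_trans_add (m x y z c d : int) :
  (x == y + c %[mod m])%Z -> (y == z + d %[mod m])%Z -> (x == z + (c + d) %[mod m])%Z.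
Proof.
rewrite !eqz_mod_dvd => h1 h2.
have -> : (x - (z + (c + d)) = (x - (y + c)) + (y - (z + d)))%R by ring.
exact: rpredD.
Qed.

Lemma eqz_mod_add_sub (m x y d : int) :
  (x == y + d %[mod m])%Z = (y == x - d %[mod m])%Z.
Proof.
rewrite !eqz_mod_dvd -rpredN.
by have -> : (- (x - (y + d)) = y - (x - d))%R by ring.
Qed.

Section CycleArithmetic.
Local Open Scope ring_scope.
Variable k : nat.
Implicit Types (i j l : 'I_k) (t : int).

Lemma ord_modz i : (i%:Z %% k)%Z = i%:Z.
Proof. by rewrite modz_small // ltz_nat ltn_ord. Qed.

Lemma ord_eqz_modE i t : (i%:Z == t %[mod k])%Z = (val i == absz (t %% k)%Z).
Proof.
have k_gt0 : (0 < k)%N by apply: leq_ltn_trans (ltn_ord i).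
by rewrite ord_modz -eqz_nat gez0_abs // modz_ge0 // -lt0n.
Qed.

Lemma ord_eqz_mod_inj i i' t :
  (i%:Z == t %[mod k])%Z -> (i'%:Z == t %[mod k])%Z -> i = i'.
Proof. by rewrite !ord_eqz_modE => /eqP ei /eqP ei'; apply: val_inj; rewrite ei ei'. Qed.

Lemma card_eqz_mod_le1 t : (#|[pred i : 'I_k | (i%:Z == t %[mod k])%Z]| <= 1)%N.
Proof.
by apply/card_le1_eqP => i i'; rewrite !inE => hi hi'; apply: ord_eqz_mod_inj hi' hi.
Qed.

Lemma card_eqz_mod2_le2 t1 t2 (A : {pred 'I_k}) :
  {subset A <= [pred i : 'I_k | (i%:Z == t1 %[mod k])%Z || (i%:Z == t2 %[mod k])%Z]} ->
  (#|A| <= 2)%N.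
Proof.
move=> /subsetP /subset_leq_card /leq_trans; apply.
set P1 := [pred i : 'I_k | (i%:Z == t1 %[mod k])%Z].
set P2 := [pred i : 'I_k | (i%:Z == t2 %[mod k])%Z].
rewrite (eq_card (B := [predU P1 & P2])) //.
rewrite -(leq_add2r #|[predI P1 & P2]|) cardUI.
exact: leq_trans (leq_add (card_eqz_mod_le1 t1) (card_eqz_mod_le1 t2)) (leq_addr _ _).
Qed.

Lemma ord_eqz_mod_eq i j : (i%:Z == j%:Z %[mod k])%Z = (i == j).
Proof. by rewrite !ord_modz eqz_nat. Qed.

Lemma cyc_adjE i j :
  cyc_adj i j = (i%:Z == j%:Z + 1 %[mod k])%Z || (j%:Z == i%:Z + 1 %[mod k])%Z.
Proof.
have succz (x : nat) : x%:Z + 1 = x.+1%:Z by rewrite -addn1 PoszD.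
by rewrite /cyc_adj !ord_eqz_modE !succz !modz_nat.
Qed.

Lemma cyc_nbr2E i j : j \in nbr2 (@cyc_adj k) i ->
  (i%:Z == j%:Z + 2 %[mod k])%Z || (j%:Z == i%:Z + 2 %[mod k])%Z.
Proof.
rewrite inE => /and3P [ji _ /existsP [l /andP [il lj]]].
move: il lj; rewrite !cyc_adjE => /orP [il | li] /orP [lj | jl].
- by apply/orP; left; apply: eqz_mod_trans_add il lj.
- by rewrite (ord_eqz_mod_inj il jl) eqxx in ji.
- rewrite !(eqz_mod_add_sub _ l%:Z) in li lj.
  by rewrite (ord_eqz_mod_inj li lj) eqxx in ji.
- by apply/orP; right; apply: eqz_mod_trans_add jl li.
Qed.

Lemma card_cyc_adj_le2 j : (#|[pred i | cyc_adj i j]| <= 2)%N.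
Proof.
apply: (@card_eqz_mod2_le2 (j%:Z + 1) (j%:Z - 1)) => i.
by rewrite inE cyc_adjE (eqz_mod_add_sub _ j%:Z).
Qed.

Lemma card_cyc_nbr2_le2 j : (#|[pred i | j \in nbr2 (@cyc_adj k) i]| <= 2)%N.
Proof.
apply: (@card_eqz_mod2_le2 (j%:Z + 2) (j%:Z - 2)) => i.
by rewrite inE => /cyc_nbr2E; rewrite (eqz_mod_add_sub _ j%:Z).
Qed.

End CycleArithmetic.

Section DisjunctiveWeight.
Variables (T : finType) (e : rel T).

Definition dd_weight (v s : T) : nat :=
  2 * (v == s) + 2 * (s \in nbr1 e v) + (s \in nbr2 e v).

Lemma dd_weight_sum_ge2 (S : {set T}) :
  disjunctive_dominating e S -> forall v, 2 <= \sum_(s in S) dd_weight v s.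
Proof.
move=> DD v; case: (boolP (v \in S)) => [vS | /DD /orP [N1S | N2S]].
- by rewrite (bigD1 v) //= /dd_weight eqxx -!addnA leq_addr.
- apply: (@leq_trans (\sum_(s in S) 2 * (s \in nbr1 e v))).
    by rewrite -big_distrr /= sum_nat_mem_setI; move: N1S; lia.
  by apply: leq_sum => s _; rewrite /dd_weight -addnA addnCA leq_addr.
- apply: (@leq_trans (\sum_(s in S) (s \in nbr2 e v : nat))).
    by rewrite sum_nat_mem_setI.
  by apply: leq_sum => s _; rewrite /dd_weight leq_addl.
Qed.

End DisjunctiveWeight.

Section CartesianProduct.
Variables (U V : finType) (e1 : rel U) (e2 : rel V).
Local Notation cart := (cart_adj e1 e2).
Implicit Types (a b : U) (j k : V).

Lemma cart_nbr2_cases a b j k : (b, k) \in nbr2 cart (a, j) ->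
  [|| (a == b) && (k \in nbr2 e2 j), e1 a b && e2 j k | (j == k) && (b \in nbr2 e1 a)].
Proof.
rewrite inE /cart_adj /= xpair_eqE => /and3P [ne nadj /existsP [[a' l] /andP [/= h1 h2]]].
case/orP: h1 => /andP [/eqP ? h1]; case/orP: h2 => /andP [/eqP ? h2]; subst.
- move: ne nadj; rewrite !eqxx /= => ne /norP [nadj _].
  rewrite !inE ne nadj /=; apply/or3P; apply: Or31.
  by apply/existsP; exists l; rewrite h1 h2.
- by rewrite h1 h2 orbT.
- by rewrite h1 h2 orbT.
- move: ne nadj; rewrite !eqxx andbT /= => ne /norP [_ nadj].
  rewrite !inE ne nadj /=; apply/or3P; apply: Or33.
  by apply/existsP; exists a'; rewrite h1 h2.
Qed.

Lemma cart_weight_le a b j k :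
  dd_weight cart (a, j) (b, k) <=
    (a == b) * (2 * (j == k) + 2 * e2 j k + (k \in nbr2 e2 j))
    + e1 a b * (2 * (j == k) + e2 j k) + (b \in nbr2 e1 a) * (j == k).
Proof.
rewrite /dd_weight xpair_eqE [(b, k) \in nbr1 _ _]inE /cart_adj /=.
case: (boolP ((b, k) \in nbr2 cart (a, j))) => [/cart_nbr2_cases | _];
  case: (a == b); case: (j == k); case: (e1 a b); case: (e2 j k);
  case: (k \in nbr2 e2 j); case: (b \in nbr2 e1 a) => //.
Qed.

Lemma sum_cart_weight_le b j k :
  \sum_(a : U) dd_weight cart (a, j) (b, k) <=
    2 * (j == k) + 2 * e2 j k + (k \in nbr2 e2 j)
    + #|[pred a | e1 a b]| * (2 * (j == k) + e2 j k)
    + #|[pred a | b \in nbr2 e1 a]| * (j == k).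
Proof.
apply: leq_trans; first by apply: leq_sum => a _; apply: cart_weight_le.
by rewrite !big_split /= (sum_nat_mem_cardM (pred1 b)) card1 mul1n
  (sum_nat_mem_cardM [pred a | e1 a b]) (sum_nat_mem_cardM [pred a | b \in nbr2 e1 a]).
Qed.

End CartesianProduct.

Section Torus.
Variables m n : nat.
Local Notation torus := (@torus_adj m n).
Local Notation cyc := (@cyc_adj n).

Lemma sum_torus_weight_le (b : 'I_m) (j k : 'I_n) :
  \sum_(a : 'I_m) dd_weight torus (a, j) (b, k) <=
    8 * (j == k) + 4 * cyc j k + (k \in nbr2 cyc j).
Proof.
apply: leq_trans (sum_cart_weight_le _ _ b j k) _.
have := card_cyc_adj_le2 b; have := card_cyc_nbr2_le2 b.
by case: (j == k); case: (cyc j k) => /=; nia.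
Qed.

Local Open Scope ring_scope.

Lemma cyc_column_weight_le (j k : 'I_n) :
  (8 * (j == k) + 4 * cyc j k + (k \in nbr2 cyc j) <=
    (k%:Z == j%:Z - 2 %[mod n])%Z + 4 * (k%:Z == j%:Z - 1 %[mod n])%Z
    + 8 * (k%:Z == j%:Z %[mod n])%Z
    + 4 * (k%:Z == j%:Z + 1 %[mod n])%Z + (k%:Z == j%:Z + 2 %[mod n])%Z)%N.
Proof.
rewrite ord_eqz_mod_eq eq_sym.
have := @cyc_nbr2E n j k; have := cyc_adjE j k.
rewrite !(eqz_mod_add_sub _ j%:Z) => -> /implyP.
case: (k \in _); case: (k == j);
  case: (_ == _ - 2 %[mod n])%Z; case: (_ == _ - 1 %[mod n])%Z;
  case: (_ == _ + 1 %[mod n])%Z; case: (_ == _ + 2 %[mod n])%Z => //.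
Qed.

Lemma colcount_sum (S : {set 'I_m * 'I_n}) (t : int) :
  colcount S t = (\sum_(s in S) (s.2%:Z == t %[mod n])%Z)%N.
Proof.
set C := [set v : 'I_m * 'I_n | (v.2%:Z == t %[mod n])%Z].
rewrite /colcount (eq_bigr (fun s => (s \in C : nat))) => [|s _]; last by rewrite inE.
by rewrite sum_nat_mem_setI; apply: eq_card => s; rewrite !inE ord_eqz_modE andbC.
Qed.

End Torus.

Theorem lemma1 (m n : nat) (S : {set 'I_m * 'I_n}) :
  3 <= m -> 5 <= n ->
  disjunctive_dominating (@torus_adj m n) S ->
  forall j : 'I_n,
    (colcount S (j%:Z - 2)%R + 4 * colcount S (j%:Z - 1)%R + 8 * colcount S j%:Z
     + 4 * colcount S (j%:Z + 1)%R + colcount S (j%:Z + 2)%R >= 2 * m)%N.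
Proof.
move=> _ _ DD j.
have column_ge :
    2 * m <= \sum_(a : 'I_m) \sum_(s in S) dd_weight (@torus_adj m n) (a, j) s.
  rewrite -[in 2 * m](card_ord m) mulnC -sum_nat_const.
  by apply: leq_sum => a _; apply: dd_weight_sum_ge2.
apply: leq_trans column_ge _; rewrite exchange_big /= !colcount_sum.
rewrite !big_distrr -!big_split /=.
apply: leq_sum => -[b k] _ /=.
exact: leq_trans (sum_torus_weight_le b j k) (cyc_column_weight_le j k).
Qed.
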